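(* If $m,n,s,t$ are positive integers, then the direct product ${\sf M}_m(C_{2s+1})\times {\sf M}_n(C_{2t+1})$ is not a cover graph.
   Context: $C_k$ is the cycle on $k$ vertices. A graph is a cover graph if it is the underlying (undirected) graph of the Hasse diagram of some finite partially ordered set. The direct product $G \times H$ has vertex set $V(G)\times V(H)$, with $(g_i,h_s)$ adjacent to $(g_j,h_t)$ if and only if $g_ig_j \in E(G)$ and $h_sh_t \in E(H)$. For a graph $G$ with vertex set $V_0=\{\langle 0,j\rangle : 0\le j\le n-1\}$ and edge set $E_0$, and $m>0$, the generalized Mycielskian ${\sf M}_m(G)$ has vertex set $V_0\cup V_1\cup\cdots\cup V_m\cup\{u\}$ where $V_i=\{\langle i,j\rangle: 0\le j\le n-1\}$, and edge set $E_0\cup E_1\cup\cdots\cup E_m\cup\{\langle m,j\rangle u: 0\le j\le n-1\}$, where $E_i=\{\langle i-1,j\rangle\langle i,k\rangle : \langle 0,j\rangle\langle 0,k\rangle\in E_0\}$ for $1\le i\le m$. *)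

From mathcomp Require Import all_boot.
Set Implicit Arguments. Unset Strict Implicit. Unset Printing Implicit Defensive.

Definition cycle_rel (k : nat) : rel 'I_k :=
  fun i j => (val j == i.+1 %% k) || (val i == j.+1 %% k).

Arguments cycle_rel k : clear implicits.

(* Vertex <i, j> (0 <= i <= m, j in T) is Some (i, j); the apex u is None.
   <a,j> ~ <b,k> iff jk in E_0 and (a = b = 0, or |a - b| = 1);
   u ~ <m, j> for every j. *)
Definition myc_rel (T : finType) (e : rel T) (m : nat) : rel (option ('I_m.+1 * T)) :=
  fun x y =>
    match x, y with
    | Some (a, j), Some (b, k) =>
        e j k && [|| (val a == 0) && (val b == 0), val a + 1 == val b | val b + 1 == val a]
    | Some (a, _), None => val a == m
    | None, Some (b, _) => val b == m
    | None, None => false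
    end.

Arguments myc_rel {T} e m.

Definition prod_rel (A B : finType) (eA : rel A) (eB : rel B) : rel (A * B) :=
  fun x y => eA x.1 y.1 && eB x.2 y.2.

Definition is_partial_order (V : finType) (le : rel V) : Prop :=
  reflexive le /\ antisymmetric le /\ transitive le.

Definition covers (V : finType) (le : rel V) (x y : V) : bool :=
  [&& x != y, le x y &
      [forall z, ~~ [&& z != x, z != y, le x z & le z y]]].

Definition is_cover_graph (V : finType) (e : rel V) : Prop :=
  exists le : rel V, is_partial_order le /\
    forall x y, e x y = covers le x y || covers le y x.

From mathcomp Require Import all_boot all_algebra zify.
Set Implicit Arguments. Unset Strict Implicit. Unset Printing Implicit Defensive.
Import GRing.Theory.

(* Orient every edge xy of a cover graph by the order: orient x y = +1 if x <= y
   and -1 otherwise.  Along any closed walk of length 4 the orientations sum to 0,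
   since three consecutive edges pointing the same way would put the middle
   vertices strictly inside the covering pair of the fourth edge.  Hence the
   orientation sum of a closed walk does not change when the walk is deformed
   across such squares.  In M_m(C_k) x M_n(C_l) with k, l odd, consider the
   closed walk of length 2kl that winds around both cycles while alternating
   between levels (a, b) and (a-1, b-1).  Squares deform it from levels (0, 0)
   to levels (m, n), and there it can be contracted onto the apex (u, u), so its
   sum is 0.  At levels (0, 0) it runs twice around a closed walk of odd length
   kl, so its sum is twice an odd number: a contradiction. *)

Section CoverGraphOrientation.

Variables (V : finType) (le e : rel V).
Hypotheses (le_anti : antisymmetric le) (le_trans : transitive le).
Hypothesis e_sym : symmetric e.
Hypothesis e_cover : forall x y, e x y = covers le x y || covers le y x.

Definition orient (x y : V) : int := if le x y then 1%R else (-1)%R.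

Lemma cover_edge_neq x y : e x y -> x != y.
Proof.
by rewrite e_cover /covers => /orP[] /and3P[] // ? _ _; rewrite eq_sym.
Qed.

Lemma cover_edge_le x y : e x y -> le x y = ~~ le y x.
Proof.
move=> exy; have := cover_edge_neq exy.
case lxy: (le x y); case lyx: (le y x) => //=.
  by rewrite (le_anti (introT andP (conj lxy lyx))) eqxx.
by move: exy; rewrite e_cover /covers lxy lyx !andbF.
Qed.

Lemma orient_edgeN x y : e x y -> (orient x y + orient y x = 0)%R.
Proof. by move=> exy; rewrite /orient (cover_edge_le exy); case: (le y x). Qed.

Lemma square_no_chain a b c d :
  e a b -> e c d -> e d a -> b != d -> ~~ [&& le a b, le b c & le c d].
Proof.
move=> eab ecd eda nbd; apply/negP => /and3P[lab lbc lcd].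
have lbd := le_trans lbc lcd; have lad := le_trans lab lbd.
have nba : b != a by rewrite eq_sym (cover_edge_neq eab).
have := eda; rewrite e_sym e_cover /covers lad (cover_edge_le eda) lad /= andbF orbF.
by case/andP=> _ /forallP/(_ b); rewrite nba nbd lab lbd.
Qed.

Lemma orient_square a b c d : e a b -> e b c -> e c d -> e d a ->
  (orient a b + orient b c + orient c d + orient d a = 0)%R.
Proof.
move=> eab ebc ecd eda.
have edgeN := orient_edgeN.
have [<-|nac] := eqVneq a c.
  by have := edgeN _ _ eab; have := edgeN _ _ eda; lia.
have [<-|nbd] := eqVneq b d.
  by have := edgeN _ _ eab; have := edgeN _ _ ebc; lia.
have nca : c != a by rewrite eq_sym.
have ndb : d != b by rewrite eq_sym.
have eba : e b a by rewrite e_sym.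
have ecb : e c b by rewrite e_sym.
have edc : e d c by rewrite e_sym.
have ead : e a d by rewrite e_sym.
have := square_no_chain eab ecd eda nbd.
have := square_no_chain ebc eda eab nca.
have := square_no_chain ecd eab ebc ndb.
have := square_no_chain eda ebc ecd nac.
have := square_no_chain edc eba ead nca.
have := square_no_chain ecb ead edc nbd.
have := square_no_chain eba edc ecb nac.
have := square_no_chain ead ecb eba ndb.
rewrite (cover_edge_le eba) (cover_edge_le ecb) (cover_edge_le edc)
  (cover_edge_le ead) /orient.
by case: (le a b); case: (le b c); case: (le c d); case: (le d a).
Qed.

End CoverGraphOrientation.

Section SquareInvariantSums.

Variables (V : Type) (e : rel V) (U : V -> V -> int).
Hypothesis e_sym : symmetric e.
Hypothesis U_edgeN : forall x y, e x y -> (U x y + U y x = 0)%R.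
Hypothesis U_square : forall a b c d, e a b -> e b c -> e c d -> e d a ->
  (U a b + U b c + U c d + U d a = 0)%R.

Lemma two_paths_sum_eq a b r r' : e a r -> e r b -> e a r' -> e r' b ->
  (U a r + U r b = U a r' + U r' b)%R.
Proof.
move=> ear erb ear' er'b.
have := U_square ear erb (etrans (e_sym _ _) er'b) (etrans (e_sym _ _) ear').
by have := U_edgeN er'b; have := U_edgeN ear'; lia.
Qed.

Definition zigzag (x y : nat -> V) := forall i, e (x i) (y i) /\ e (y i) (x i.+1).

Definition zigzag_sum N (x y : nat -> V) : int :=
  \sum_(0 <= i < N) (U (x i) (y i) + U (y i) (x i.+1)).

Lemma zigzag_sum_detour N x y y' : zigzag x y -> zigzag x y' ->
  zigzag_sum N x y = zigzag_sum N x y'.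
Proof.
move=> xy xy'; apply: eq_bigr => i _.
by have [? ?] := xy i; have [? ?] := xy' i; apply: two_paths_sum_eq.
Qed.

Lemma zigzag_sum_const N x v : zigzag x (fun=> v) -> x N = x 0 ->
  zigzag_sum N x (fun=> v) = 0%R.
Proof.
move=> xv xN; rewrite /zigzag_sum (@telescope_sumr_eq _ 0 N (fun i => - U (x i) v)%R) //.
  by rewrite xN subrr.
by move=> i _; have := U_edgeN (xv i.+1).1; lia.
Qed.

Lemma zigzag_sum_shift N x x' z : zigzag x z -> zigzag x' z ->
  x N = x 0 -> x' N = x' 0 -> z N = z 0 -> zigzag_sum N x z = zigzag_sum N x' z.
Proof.
move=> xz x'z xN x'N zN; apply/eqP; rewrite -subr_eq0 -sumrB.
(* Telescope along the rungs x i, z i, x' i of the ladder between the two walks. *)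
pose D i := (U (x i) (z i) + U (z i) (x' i))%R.
rewrite (@telescope_sumr_eq _ 0 N (fun i => - D i)%R) //; first by rewrite /D xN x'N zN subrr.
move=> i _; have [exz ezx] := xz i; have [ex'z ezx'] := x'z i.
have [exz1 _] := xz i.+1; have [ex'z1 _] := x'z i.+1.
have := two_paths_sum_eq (etrans (e_sym _ _) ezx) ezx' exz1 (etrans (e_sym _ _) ex'z1).
by have := U_edgeN ex'z; have := U_edgeN ezx; rewrite /D; lia.
Qed.

End SquareInvariantSums.

Lemma sum_pairs (f : nat -> int) N :
  (\sum_(0 <= i < N) (f i.*2 + f i.*2.+1) = \sum_(0 <= j < N.*2) f j)%R.
Proof.
elim: N => [|N IH]; first by rewrite !big_geq.
by rewrite doubleS !big_nat_recr //= IH addrA.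
Qed.

Lemma sum_double_period (f : nat -> int) N : (forall j, f (N + j) = f j) ->
  (\sum_(0 <= j < N.*2) f j = 2 * \sum_(0 <= j < N) f j)%R.
Proof.
move=> fN; rewrite -addnn (@big_cat_nat _ _ _ N) ?leq_addr // /=.
rewrite -{2}[N]add0n big_addn addnK.
under [X in (_ + X)%R]eq_bigr do rewrite addnC fN.
by set S := (\sum_(0 <= j < N) f j)%R; lia.
Qed.

Lemma sum_signs_parity (f : nat -> int) N : (forall j, f j = 1 \/ f j = -1)%R ->
  exists q : int, (\sum_(0 <= j < N) f j = N%:Z + 2 * q)%R.
Proof.
move=> f_sign; elim: N => [|N [q IH]]; first by exists 0%R; rewrite big_geq.
rewrite big_nat_recr //= IH; case: (f_sign N) => ->.
- by exists q; lia.
- by exists (q - 1)%R; lia.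
Qed.

Lemma sum_signs_period_neq0 (f : nat -> int) N : odd N ->
  (forall j, f (N + j) = f j) -> (forall j, f j = 1 \/ f j = -1)%R ->
  (\sum_(0 <= j < N.*2) f j != 0)%R.
Proof.
move=> oddN fN f_sign; rewrite sum_double_period //.
have [q ->] := sum_signs_parity N f_sign.
have [r ->] : exists r, N = r.*2.+1.
  by exists N./2; rewrite -{1}(odd_double_half N) oddN.
apply/eqP; lia.
Qed.

Definition level_adj (a b : nat) : bool :=
  [|| (a == 0) && (b == 0), a + 1 == b | b + 1 == a].

Lemma level_adj_sym a b : level_adj a b = level_adj b a.
Proof. by rewrite /level_adj; lia. Qed.

Lemma level_adj_pred a : level_adj a a.-1.
Proof. by rewrite /level_adj; lia. Qed.

Lemma cycle_rel_sym k : symmetric (cycle_rel k).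
Proof. by move=> i j; rewrite /cycle_rel orbC. Qed.

Lemma myc_rel_sym (T : finType) (e : rel T) m :
  symmetric e -> symmetric (myc_rel e m).
Proof.
move=> e_sym [[a j]|] [[b l]|] //=.
by rewrite e_sym; congr (_ && _); apply: level_adj_sym.
Qed.

Lemma prod_rel_sym (A B : finType) (eA : rel A) (eB : rel B) :
  symmetric eA -> symmetric eB -> symmetric (prod_rel eA eB).
Proof. by move=> sA sB x y; rewrite /prod_rel sA sB. Qed.

Section MycielskianVertices.

Variables (m k : nat) (k_gt0 : 0 < k).

Definition myc_vtx (a j : nat) : option ('I_m.+1 * 'I_k) :=
  Some (inord a, Ordinal (ltn_pmod j k_gt0)).

Lemma myc_vtx_adj a c j : a <= m -> c <= m -> level_adj a c ->
  myc_rel (cycle_rel k) m (myc_vtx a j) (myc_vtx c j.+1).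
Proof.
move=> am cm ac; rewrite /= !inordK ?ltnS //; apply/andP; split=> //.
by rewrite /cycle_rel /= -[j.+1]addn1 -modnDml addn1 eqxx.
Qed.

Lemma myc_vtx_apex j : myc_rel (cycle_rel k) m (myc_vtx m j) None.
Proof. by rewrite /= inordK. Qed.

Lemma myc_vtx_mod a i j : i = j %[mod k] -> myc_vtx a i = myc_vtx a j.
Proof. by move=> ij; congr (Some (_, _)); apply: val_inj. Qed.

End MycielskianVertices.

Lemma nat_ind2 (P : nat -> Prop) :
  P 0 -> P 1 -> (forall a, P a -> P a.+2) -> forall a, P a.
Proof.
move=> P0 P1 IH a; suff [] : P a /\ P a.+1 by [].
by elim: a => [|a [Pa Pa1]]; split; last exact: IH.
Qed.

Section ProductWalks.

Variables (m n k l : nat) (k_gt0 : 0 < k) (l_gt0 : 0 < l).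
Local Notation G := (prod_rel (myc_rel (cycle_rel k) m) (myc_rel (cycle_rel l) n)).
Variable le : rel (option ('I_m.+1 * 'I_k) * option ('I_n.+1 * 'I_l)).
Hypotheses (le_anti : antisymmetric le) (le_trans : transitive le).
Hypothesis le_cover : forall x y, G x y = covers le x y || covers le y x.

Let G_sym : symmetric G :=
  prod_rel_sym (myc_rel_sym (@cycle_rel_sym k)) (myc_rel_sym (@cycle_rel_sym l)).
Let orientN := orient_edgeN le_anti le_cover.
Let orient_sq := orient_square le_anti le_trans G_sym le_cover.

Definition prod_vtx a b j := (myc_vtx m k_gt0 a j, myc_vtx n l_gt0 b j).

Lemma prod_vtx_adj a b c d j : a <= m -> c <= m -> level_adj a c ->
  b <= n -> d <= n -> level_adj b d -> G (prod_vtx a b j) (prod_vtx c d j.+1).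
Proof. by move=> *; apply/andP; split; apply: myc_vtx_adj. Qed.

Lemma prod_vtx_mod a b i j : i = j %[mod k * l] -> prod_vtx a b i = prod_vtx a b j.
Proof.
move=> ij; rewrite /prod_vtx (@myc_vtx_mod m k k_gt0 a i j) ?(@myc_vtx_mod n l l_gt0 b i j) //.
  by rewrite -(modn_dvdm i (dvdn_mull k (dvdnn l))) ij modn_dvdm // dvdn_mull.
by rewrite -(modn_dvdm i (dvdn_mulr l (dvdnn k))) ij modn_dvdm // dvdn_mulr.
Qed.

Lemma level_zigzag a b c d : a <= m -> c <= m -> level_adj a c ->
  b <= n -> d <= n -> level_adj b d ->
  zigzag G (fun i => prod_vtx a b i.*2) (fun i => prod_vtx c d i.*2.+1).
Proof.
move=> am cm ac bn dn bd i; rewrite doubleS.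
by split; apply: prod_vtx_adj; rewrite // level_adj_sym.
Qed.

(* The walk stays at level 0 where a.-1 truncates, using the edges between
   level 0 and itself. *)
Definition level_sum a b := zigzag_sum (orient le) (k * l)
  (fun i => prod_vtx a b i.*2) (fun i => prod_vtx a.-1 b.-1 i.*2.+1).

Lemma level_walk_closed a b :
  prod_vtx a b (k * l).*2 = prod_vtx a b 0 /\ prod_vtx a b (k * l).*2.+1 = prod_vtx a b 1.
Proof.
split; apply: prod_vtx_mod; first by rewrite -mul2n modnMl mod0n.
by rewrite -addn1 -mul2n modnMDl.
Qed.

Lemma level_zigzag_pred a b : a <= m -> b <= n ->
  zigzag G (fun i => prod_vtx a b i.*2) (fun i => prod_vtx a.-1 b.-1 i.*2.+1).
Proof.
move=> am bn; apply: level_zigzag => //; rewrite ?level_adj_pred //;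
  exact: leq_trans (leq_pred _) _.
Qed.

Lemma level_sum_shift a a' c b b' d :
  a <= m -> a' <= m -> c <= m -> b <= n -> b' <= n -> d <= n ->
  level_adj a c -> level_adj a' c -> level_adj b d -> level_adj b' d ->
  level_sum a b = level_sum a' b'.
Proof.
move=> am a'm cm bn b'n dn ac a'c bd b'd.
have [xN zN] := level_walk_closed c d.
rewrite /level_sum (zigzag_sum_detour G_sym orientN orient_sq _
  (level_zigzag_pred am bn) (level_zigzag am cm ac bn dn bd)).
rewrite (zigzag_sum_detour G_sym orientN orient_sq _
  (level_zigzag_pred a'm b'n) (level_zigzag a'm cm a'c b'n dn b'd)).
apply: (zigzag_sum_shift G_sym orientN orient_sq);
  by [apply: level_zigzag | case: (level_walk_closed a b) | case: (level_walk_closed a' b')].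
Qed.

Lemma level_sum_base a b : a <= m -> b <= n -> level_sum a b = level_sum 0 0.
Proof.
have pred_le x y : x <= y -> x.-1 <= y by apply: leq_trans (leq_pred x).
have move_a b' : b' <= n -> forall a', a' <= m -> level_sum a' b' = level_sum 0 b'.
  move=> b'n; elim/nat_ind2 => [//|am|a' IH am].
    by apply: (level_sum_shift (c := 0) (d := b'.-1)); rewrite ?level_adj_pred ?pred_le.
  rewrite -IH; last exact: leq_trans (leqnSn _) (ltnW am).
  apply: (level_sum_shift (c := a'.+1) (d := b'.-1)); rewrite ?level_adj_pred ?pred_le //;
    rewrite /level_adj; lia.
move=> am bn; rewrite (move_a b bn a am); move: b bn.
elim/nat_ind2 => [//|bn|b' IH bn].
  by apply: (level_sum_shift (c := 0) (d := 0)); rewrite ?level_adj_pred.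
rewrite -IH; last exact: leq_trans (leqnSn _) (ltnW bn).
apply: (level_sum_shift (c := 0) (d := b'.+1)) => //; rewrite /level_adj; lia.
Qed.

Lemma level_sum_apex : level_sum m n = 0%R.
Proof.
have [xN _] := level_walk_closed m n.
have apex_zz : zigzag G (fun i => prod_vtx m n i.*2) (fun=> (None, None)).
  move=> i; split; last by rewrite G_sym; apply/andP; split; exact: myc_vtx_apex.
  by apply/andP; split; exact: myc_vtx_apex.
rewrite /level_sum (zigzag_sum_detour G_sym orientN orient_sq _
  (level_zigzag_pred (leqnn m) (leqnn n)) apex_zz).
exact: (zigzag_sum_const orientN apex_zz xN).
Qed.

Lemma level_sum_base_neq0 : odd k -> odd l -> level_sum 0 0 != 0%R.
Proof.
move=> odd_k odd_l; pose f j := orient le (prod_vtx 0 0 j) (prod_vtx 0 0 j.+1).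
have -> : level_sum 0 0 = (\sum_(0 <= i < k * l) (f i.*2 + f i.*2.+1))%R.
  by apply: eq_bigr => i _; rewrite /f doubleS.
rewrite sum_pairs; apply: sum_signs_period_neq0; first by rewrite oddM odd_k.
  by move=> j; rewrite /f -addnS !(prod_vtx_mod _ _ (modnDl _ _)).
by move=> j; rewrite /f /orient; case: ifP; [left | right].
Qed.

End ProductWalks.

Theorem theorem12 (m n s t : nat) :
  0 < m -> 0 < n -> 0 < s -> 0 < t ->
  ~ is_cover_graph
      (prod_rel (myc_rel (cycle_rel (2 * s + 1)) m)
                (myc_rel (cycle_rel (2 * t + 1)) n)).
Proof.
move=> _ _ _ _ [le [[_ [le_anti le_trans]] le_cover]].
have pos2S x : 0 < 2 * x + 1 by rewrite addn1.
have odd2S x : odd (2 * x + 1) by rewrite addn1 /= oddM.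
have := level_sum_base_neq0 (pos2S s) (pos2S t) le (odd2S s) (odd2S t).
rewrite -(level_sum_base _ _ le_anti le_trans le_cover (leqnn m) (leqnn n)).
by rewrite (level_sum_apex _ _ le_anti le_trans le_cover).
Qed.
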